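(* Let $G$ be a labeled complete graph (every edge labeled $+$ or $-$), let $\alpha,\gamma$ be real parameters with $0<\gamma<\alpha<1/2$, and let $x$ be any fractional clustering of $G$. Let $\mathcal{C}$ be the clustering produced by the following algorithm (Algorithm 1), where ties in the choice of pivot are broken arbitrarily: Set $S=V(G)$. While $S\neq\emptyset$: for each $u\in S$ let $T_u=\{w\in S\setminus\{u\} : x_{uw}\le\alpha\}$ and $T^*_u=\{w\in S\setminus\{u\} : x_{uw}\le\gamma\}$; choose a pivot $u\in S$ maximizing $|T^*_u|$ and let $T=T_u$; if $\sum_{w\in T}x_{uw}\ge \alpha|T|/2$, output the cluster $\{u\}$ and set $S=S\setminus\{u\}$; otherwise output the cluster $\{u\}\cup T$ and set $S=S\setminus(\{u\}\cup T)$. Then there is a constant $c$ depending only on $\alpha$ and $\gamma$ such that $\mathrm{err}(\mathcal{C})_v\le c\,\mathrm{err}(x)_v$ for all $v\in V(G)$.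
   Context: A (discrete) clustering of $G$ is a partition of $V(G)$. A fractional clustering of $G$ is a vector $x$ indexed by the unordered pairs of distinct vertices of $G$ with $x_{uv}\in[0,1]$ for all pairs and $x_{vz}\le x_{vw}+x_{wz}$ for all distinct $v,w,z$; by convention $x_{uu}=0$. For vertex $v$, $N^+(v)$ and $N^-(v)$ denote the sets of vertices joined to $v$ by a $+$ edge, resp. a $-$ edge. The error vector of a fractional clustering $x$ is the vector indexed by $V(G)$ with $\mathrm{err}(x)_v=\sum_{w\in N^+(v)}x_{vw}+\sum_{w\in N^-(v)}(1-x_{vw})$. For a clustering $\mathcal{C}$, $x^{\mathcal{C}}$ is the fractional clustering with $x^{\mathcal{C}}_{uv}=0$ if $u,v$ lie in the same cluster and $1$ otherwise, and $\mathrm{err}(\mathcal{C})=\mathrm{err}(x^{\mathcal{C}})$ (so $\mathrm{err}(\mathcal{C})_v$ is the number of $+$ edges at $v$ going between clusters plus the number of $-$ edges at $v$ inside $v$'s cluster). *)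

From HB Require Import structures.
From mathcomp Require Import all_boot all_order all_algebra.
From mathcomp Require Import reals.
Set Implicit Arguments. Unset Strict Implicit. Unset Printing Implicit Defensive.
Import Order.TTheory GRing.Theory Num.Theory.
Local Open Scope ring_scope.

(* A labeled complete graph on the finite vertex type V is given by a
   symmetric relation [plus]: for distinct u, v the edge uv is labeled +
   iff [plus u v], and - otherwise. *)
Definition labeled_complete (V : finType) (plus : rel V) : Prop :=
  forall u v : V, plus u v = plus v u.

Definition Nplus (V : finType) (plus : rel V) (v : V) : {set V} :=
  [set w | (w != v) && plus v w].
Definition Nminus (V : finType) (plus : rel V) (v : V) : {set V} :=
  [set w | (w != v) && ~~ plus v w].

Definition frac_clustering (R : realType) (V : finType) (x : V -> V -> R) : Prop :=
  [/\ forall u v, u != v -> x u v = x v u,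
      forall u v, u != v -> 0 <= x u v <= 1
    & forall v w z, v != w -> w != z -> v != z -> x v z <= x v w + x w z].

Definition err_frac (R : realType) (V : finType) (plus : rel V)
    (x : V -> V -> R) (v : V) : R :=
  \sum_(w in Nplus plus v) x v w + \sum_(w in Nminus plus v) (1 - x v w).

Definition same_cluster (V : finType) (P : seq {set V}) (v w : V) : bool :=
  has (fun B : {set V} => (v \in B) && (w \in B)) P.

Definition x_of_clustering (R : realType) (V : finType) (P : seq {set V})
    (u v : V) : R := if same_cluster P u v then 0 else 1.

Definition err_clust (R : realType) (V : finType) (plus : rel V)
    (P : seq {set V}) (v : V) : R :=
  err_frac plus (x_of_clustering R P) v.

Definition Tset (R : realType) (V : finType) (x : V -> V -> R) (a : R)
    (S : {set V}) (u : V) : {set V} :=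
  [set w in S | (w != u) && (x u w <= a)].

(* [alg1_run x alpha gamma S P]: P (list of output clusters, in order) is a
   possible output of Algorithm 1 started with current set S, for some
   choice of pivots (ties broken arbitrarily). *)
Inductive alg1_run (R : realType) (V : finType) (x : V -> V -> R) (alpha gamma : R)
  : {set V} -> seq {set V} -> Prop :=
| alg1_done : alg1_run x alpha gamma set0 [::]
| alg1_single : forall (S : {set V}) (u : V) (P : seq {set V}),
    u \in S ->
    (forall u', u' \in S -> #|Tset x gamma S u'| <= #|Tset x gamma S u|)%N ->
    \sum_(w in Tset x alpha S u) x u w >= alpha * #|Tset x alpha S u|%:R / 2 ->
    alg1_run x alpha gamma (S :\ u) P ->
    alg1_run x alpha gamma S ([set u] :: P)
| alg1_cluster : forall (S : {set V}) (u : V) (P : seq {set V}),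
    u \in S ->
    (forall u', u' \in S -> #|Tset x gamma S u'| <= #|Tset x gamma S u|)%N ->
    \sum_(w in Tset x alpha S u) x u w < alpha * #|Tset x alpha S u|%:R / 2 ->
    alg1_run x alpha gamma (S :\: (u |: Tset x alpha S u)) P ->
    alg1_run x alpha gamma S ((u |: Tset x alpha S u) :: P).

(* Fix a vertex v and follow the run of the algorithm.  When a cluster C is cut
   off the current set S, the edges from v to C are settled for good.  If v lies
   in C, every edge from v into S is settled at once, and v's error on S is at
   most 2/slack times its fractional error on S: an isolated pivot v is paid for
   by the large average of x over T_v; a pivot v by the thresholds alone; and
   v in T_u by the maximality of |T*_u|, which pays for the edges to T*_v.  If v
   is outside a non-singleton C, the small average of x over T_u pays for the
   edges from v to C.  The only uncharged errors come from isolated pivots u with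
   x_vu <= alpha/4.  Each of them removes a vertex from the set N of such
   vertices, and at that moment |N| <= |T_u| <= (4/alpha) times the fractional
   error of v on S, so they cost at most (4/alpha) err(x)_v in total. *)

From HB Require Import structures.
From mathcomp Require Import all_boot all_order all_algebra.
From mathcomp Require Import reals.
From mathcomp Require Import lra.
Import Order.TTheory GRing.Theory Num.Theory.
Local Open Scope ring_scope.
Set Implicit Arguments. Unset Strict Implicit. Unset Printing Implicit Defensive.

Section SumsOverSubsets.
Variables (R : numDomainType) (T : finType).

Lemma sumr_le_subset (A B : {set T}) (f : T -> R) : A \subset B ->
  (forall w, w \in B -> 0 <= f w) -> \sum_(w in A) f w <= \sum_(w in B) f w.
Proof.
move=> AB f_ge0; rewrite [X in _ <= X](big_setID A) (setIidPr AB) lerDl.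
by apply: sumr_ge0 => w; rewrite inE => /andP[_ /f_ge0].
Qed.

Lemma sum_indicator (A B : {set T}) (f : T -> R) : A \subset B ->
  \sum_(w in B) (if w \in A then f w else 0) = \sum_(w in A) f w.
Proof.
move=> AB; rewrite -big_mkcondr; apply: eq_bigl => w; rewrite andbC.
by case: (boolP (w \in A)) => // /(subsetP AB) ->.
Qed.

End SumsOverSubsets.

Section RunStructure.
Variables (R : realType) (V : finType) (x : V -> V -> R) (alpha gamma : R).

Lemma alg1_run_blocks_sub S P : alg1_run x alpha gamma S P ->
  forall B, B \in P -> B \subset S.
Proof.
elim=> {S P} [|S u P uS _ _ _ IH|S u P uS _ _ _ IH] B; first by rewrite in_nil.
- rewrite inE => /orP[/eqP->|/IH BS]; first by rewrite sub1set.
  exact: subset_trans BS (subsetDl _ _).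
- rewrite inE => /orP[/eqP->|/IH BS]; last exact: subset_trans BS (subsetDl _ _).
  by rewrite subUset sub1set uS; apply/subsetP => w; rewrite inE => /andP[].
Qed.

Lemma alg1_run_same_cluster_out S P w z : alg1_run x alpha gamma S P ->
  (w \notin S) || (z \notin S) -> same_cluster P w z = false.
Proof.
move=> run wzS; apply/hasP => -[B /(alg1_run_blocks_sub run) /subsetP BS /andP[wB zB]].
by move: wzS; rewrite (BS _ wB) (BS _ zB).
Qed.

End RunStructure.

Section VertexError.
Variables (R : realType) (V : finType) (plus : rel V) (v : V).

Definition edge_err (y : V -> V -> R) (w : V) : R := if plus v w then y v w else 1 - y v w.

Definition err_on (y : V -> V -> R) (S : {set V}) : R := \sum_(w in S :\ v) edge_err y w.

(* The row at [v] of [x^C] for any clustering in which the cluster of [v] is [C]. *)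
Definition x_block (C : {set V}) : V -> V -> R := fun _ w => if w \in C then 0 else 1.

Lemma err_frac_err_on y : err_frac plus y v = err_on y [set: V].
Proof.
rewrite /err_frac /err_on [in RHS](big_setID (Nplus plus v)) /=.
have -> : ([set: V] :\ v) :&: Nplus plus v = Nplus plus v.
  by apply/setP => w; rewrite !inE; case: (w != v).
have -> : ([set: V] :\ v) :\: Nplus plus v = Nminus plus v.
  by apply/setP => w; rewrite !inE; case: (w != v); case: (plus v w).
by congr (_ + _); apply: eq_bigr => w; rewrite inE /edge_err => /andP[_];
  [move=> -> | move=> /negbTE ->].
Qed.

Lemma err_on_split y (S C : {set V}) : C \subset S -> v \notin C ->
  err_on y S = \sum_(w in C) edge_err y w + err_on y (S :\: C).
Proof.
move=> CS vC; rewrite /err_on (big_setID C); congr (_ + _).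
  apply: eq_bigl => w; rewrite !inE; case: (boolP (w \in C)) => wC; rewrite ?andbF //.
  by rewrite (subsetP CS _ wC) !andbT; apply/eqP => wv; rewrite -wv wC in vC.
by apply: eq_bigl => w; rewrite !inE; case: (w \in C); case: (w != v).
Qed.

Lemma edge_err_x_block_out (C : {set V}) w : w \notin C ->
  edge_err (x_block C) w = (plus v w)%:R.
Proof. by rewrite /edge_err /x_block => /negbTE ->; case: (plus v w); rewrite ?subrr. Qed.

Lemma edge_err_x_block_in (C : {set V}) w : w \in C ->
  edge_err (x_block C) w = (~~ plus v w)%:R.
Proof. by rewrite /edge_err /x_block => ->; case: (plus v w); rewrite ?subr0. Qed.

Variables (x : V -> V -> R) (alpha gamma : R).

Lemma err_on_run_in (S C : {set V}) P : alg1_run x alpha gamma (S :\: C) P -> v \in C ->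
  err_on (x_of_clustering R (C :: P)) S = err_on (x_block C) S.
Proof.
move=> run vC; apply: eq_bigr => w _.
rewrite /edge_err /x_of_clustering /x_block /same_cluster /= vC /=.
by rewrite -/(same_cluster P v w) (alg1_run_same_cluster_out run) ?orbF // !inE vC.
Qed.

Lemma err_on_run_out (S C : {set V}) P : alg1_run x alpha gamma (S :\: C) P ->
  C \subset S -> v \notin C ->
  err_on (x_of_clustering R (C :: P)) S =
  \sum_(w in C) (plus v w)%:R + err_on (x_of_clustering R P) (S :\: C).
Proof.
move=> run CS vC; rewrite (err_on_split _ CS vC); congr (_ + _); apply: eq_bigr => w.
  move=> wC; rewrite /edge_err /x_of_clustering /same_cluster /= (negbTE vC) /=.
  rewrite -/(same_cluster P v w) (alg1_run_same_cluster_out run) ?inE ?wC ?orbT //.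
  by case: (plus v w); rewrite ?subrr.
by rewrite /edge_err /x_of_clustering /same_cluster /= (negbTE vC).
Qed.

End VertexError.

Section Charging.
Variables (R : realType) (alpha gamma : R).

(* Every threshold comparison in the case analyses below leaves a margin of at
   least [slack], so each settled edge costs at most [slack^-1] times its
   fractional error. *)
Definition slack : R :=
  Num.min (Num.min gamma ((alpha - gamma) / 2)) (Num.min (1 / 2 - alpha) (alpha / 4)).

Hypotheses (gamma_gt0 : 0 < gamma) (gamma_lt_alpha : gamma < alpha)
  (alpha_lt_half : alpha < 1 / 2).

Lemma slack_bounds : [/\ 0 < slack, slack <= gamma, slack <= (alpha - gamma) / 2,
  slack <= 1 / 2 - alpha & slack <= alpha / 4].
Proof.
move: (gamma_gt0) (gamma_lt_alpha) (alpha_lt_half) => ? ? ?.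
have h1 : 0 < (alpha - gamma) / 2 by lra.
have h2 : 0 < 1 / 2 - alpha by lra.
have h3 : 0 < alpha / 4 by lra.
by rewrite /slack !lt_min !ge_min !lexx ?orbT gamma_gt0 h1 h2 h3.
Qed.

Ltac param_lra :=
  have := slack_bounds;
  move: (gamma_gt0) (gamma_lt_alpha) (alpha_lt_half) => ? ? ? [? ? ? ? ?]; lra.

Lemma slack_gt0 : 0 < slack. Proof. by case: slack_bounds. Qed.

Lemma alpha_gt0 : 0 < alpha. Proof. by param_lra. Qed.

Lemma one_le_slack_inv_mul (t : R) : slack <= t -> 1 <= slack^-1 * t.
Proof. by rewrite ler_pdivlMl ?slack_gt0 // mulr1. Qed.

Lemma inv_alpha_le_slack_inv : alpha^-1 <= slack^-1.
Proof. by rewrite lef_pV2 ?posrE ?slack_gt0 //; param_lra. Qed.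

Lemma slack_inv_mul_ge0 (t : R) : 0 <= t -> 0 <= slack^-1 * t.
Proof. by move=> t0; rewrite mulr_ge0 // invr_ge0 ltW // slack_gt0. Qed.

Variables (V : finType) (plus : rel V) (x : V -> V -> R).
Hypothesis x_frac : frac_clustering x.

Lemma x_sym u w : u != w -> x u w = x w u.
Proof. by case: x_frac => h _ _; apply: h. Qed.

Lemma x_ge0 u w : u != w -> 0 <= x u w.
Proof. by case: x_frac => _ h _ /h /andP[]. Qed.

Lemma x_le1 u w : u != w -> x u w <= 1.
Proof. by case: x_frac => _ h _ /h /andP[]. Qed.

Lemma x_triangle u w z : u != w -> w != z -> u != z -> x u z <= x u w + x w z.
Proof. by case: x_frac => _ _; apply. Qed.

Lemma in_Tset c (S : {set V}) u w :
  (w \in Tset x c S u) = [&& w \in S, w != u & x u w <= c].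
Proof. by rewrite inE. Qed.

Variable v : V.

Local Notation edge_err := (edge_err plus v).
Local Notation err_on := (err_on plus v).
Local Notation x_block := (@x_block R V).

Lemma edge_err_ge0 w : w != v -> 0 <= edge_err x w.
Proof.
rewrite eq_sym => vw; rewrite /edge_err; case: (plus v w); first exact: x_ge0.
by rewrite subr_ge0 x_le1.
Qed.

Lemma err_on_ge0 S : 0 <= err_on x S.
Proof. by apply: sumr_ge0 => w; rewrite in_setD1 => /andP[/edge_err_ge0]. Qed.

Lemma plus_le_slack_inv_mul w : w != v -> slack <= x v w ->
  (plus v w)%:R <= slack^-1 * edge_err x w.
Proof.
rewrite eq_sym => vw xvw; rewrite /edge_err; case: (plus v w).
  exact: one_le_slack_inv_mul.
by apply: slack_inv_mul_ge0; rewrite subr_ge0 x_le1.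
Qed.

Lemma edge_err_isolated_pivot (S : {set V}) w : w \in S :\ v ->
  edge_err (x_block [set v]) w <= 2 * (slack^-1 * edge_err x w) +
    (if w \in Tset x alpha S v then 1 - 2 / alpha * x v w else 0).
Proof.
rewrite in_setD1 => /andP[wv wS]; have vw : v != w by rewrite eq_sym.
have [x0 x1] := (x_ge0 vw, x_le1 vw).
rewrite in_Tset wS wv /= edge_err_x_block_out ?inE //.
case: (leP (x v w) alpha) => [xa | ax].
  rewrite /edge_err; case: (plus v w) => /=.
    have : 0 <= (slack^-1 - alpha^-1) * x v w.
      by apply: mulr_ge0; rewrite // subr_ge0 inv_alpha_le_slack_inv.
    nra.
  have : alpha^-1 * x v w <= 1.
    by rewrite ler_pdivrMl; [rewrite mulr1 | param_lra].
  have : 1 <= slack^-1 * (1 - x v w) by apply: one_le_slack_inv_mul; param_lra.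
  nra.
have sx : slack <= x v w by param_lra.
have := slack_inv_mul_ge0 (edge_err_ge0 wv).
have := plus_le_slack_inv_mul wv sx; lra.
Qed.

Lemma err_isolated_pivot (S : {set V}) :
  alpha * #|Tset x alpha S v|%:R / 2 <= \sum_(w in Tset x alpha S v) x v w ->
  err_on (x_block [set v]) S <= 2 / slack * err_on x S.
Proof.
set T := Tset x alpha S v => avg.
have TS : T \subset S :\ v.
  by apply/subsetP => w; rewrite in_Tset !inE => /and3P[-> -> _].
rewrite /err_on; apply: le_trans (ler_sum _ (@edge_err_isolated_pivot S)) _.
rewrite big_split /= (sum_indicator _ TS) sumrB sumr_const -!mulr_sumr.
have : #|T|%:R <= 2 / alpha * \sum_(w in T) x v w.
  by rewrite mulrAC ler_pdivlMr; param_lra.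
lra.
Qed.

Lemma edge_err_cluster_pivot (S : {set V}) w : w \in S :\ v ->
  edge_err (x_block (v |: Tset x alpha S v)) w <= slack^-1 * edge_err x w.
Proof.
rewrite in_setD1 => /andP[wv wS]; have vw : v != w by rewrite eq_sym.
have [x0 x1] := (x_ge0 vw, x_le1 vw).
have e0 := slack_inv_mul_ge0 (edge_err_ge0 wv).
have [xa | ax] := leP (x v w) alpha.
  rewrite edge_err_x_block_in; last by rewrite in_setU1 in_Tset wS wv xa orbT.
  have : 1 <= slack^-1 * (1 - x v w) by apply: one_le_slack_inv_mul; param_lra.
  by move: e0; rewrite /edge_err; case: (plus v w) => /=; lra.
rewrite edge_err_x_block_out; last by rewrite in_setU1 in_Tset (negbTE wv) leNgt ax !andbF.
by apply: plus_le_slack_inv_mul => //; param_lra.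
Qed.

Lemma err_cluster_pivot (S : {set V}) :
  err_on (x_block (v |: Tset x alpha S v)) S <= 2 / slack * err_on x S.
Proof.
rewrite /err_on; apply: le_trans (ler_sum _ (@edge_err_cluster_pivot S)) _.
by rewrite -mulr_sumr; have := slack_inv_mul_ge0 (err_on_ge0 S); rewrite /err_on; lra.
Qed.

Lemma edge_err_cluster_member (S : {set V}) u w :
  v \in Tset x alpha S u -> w \in S :\ v ->
  edge_err (x_block (u |: Tset x alpha S u)) w <= slack^-1 * edge_err x w +
    (if ((alpha + gamma) / 2 < x u v) && (w \in Tset x gamma S v) then 1 else 0).
Proof.
rewrite in_Tset => /and3P[vS vu xuv]; rewrite in_setD1 => /andP[wv wS].
have uv : u != v by rewrite eq_sym.
have vw : v != w by rewrite eq_sym.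
have [x0 x1] := (x_ge0 vw, x_le1 vw).
have e0 := slack_inv_mul_ge0 (edge_err_ge0 wv).
set i := (if _ then 1 else 0); have i0 : 0 <= i by rewrite /i; case: ifP.
case: (eqVneq w u) => [wu | wu].
  rewrite edge_err_x_block_in ?wu ?setU11 //.
  have : 1 <= slack^-1 * (1 - x v u).
    by apply: one_le_slack_inv_mul; rewrite (x_sym vu); param_lra.
  by move: e0; rewrite /edge_err wu; case: (plus v u) => /=; lra.
have uw : u != w by rewrite eq_sym.
have [xa | ax] := leP (x u w) alpha.
  rewrite edge_err_x_block_in; last by rewrite in_setU1 in_Tset wS wu xa orbT.
  have : 1 <= slack^-1 * (1 - x v w).
    apply: one_le_slack_inv_mul.
    by have := x_triangle vu uw vw; rewrite (x_sym vu); param_lra.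
  by move: e0; rewrite /edge_err; case: (plus v w) => /=; lra.
rewrite edge_err_x_block_out; last by rewrite in_setU1 in_Tset (negbTE wu) leNgt ax !andbF.
have [sx | xs] := leP slack (x v w).
  by have := plus_le_slack_inv_mul wv sx; lra.
(* Then [x u v] is large by the triangle inequality, and [w] is one of the
   vertices of [Tset x gamma S v] paid for by the maximality of the pivot. *)
have tri := x_triangle uv vw uw.
have -> : i = 1.
  by rewrite /i ifT //; apply/andP; split; [|rewrite in_Tset wS wv /=]; param_lra.
have : (plus v w)%:R <= 1 :> R by rewrite lern1 leq_b1.
lra.
Qed.

Lemma card_Tset_gamma_le (S : {set V}) u : v \in Tset x alpha S u ->
  (alpha + gamma) / 2 < x u v -> #|Tset x gamma S u|%:R <= slack^-1 * err_on x S.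
Proof.
rewrite in_Tset => /and3P[vS vu xuv] bx; have uv : u != v by rewrite eq_sym.
have TS : Tset x gamma S u \subset S :\ v.
  apply/subsetP => w; rewrite in_Tset in_setD1 => /and3P[-> _ xuw]; rewrite andbT.
  by apply: contraTneq xuw => ->; rewrite -ltNge; param_lra.
rewrite -sumr_const /err_on mulr_sumr.
apply: (@le_trans _ _ (\sum_(w in Tset x gamma S u) slack^-1 * edge_err x w)).
  apply: ler_sum => w wT; have /[!in_setD1] /andP[wv _] := subsetP TS w wT.
  move: wT; rewrite in_Tset => /and3P[_ wu xuw].
  have uw : u != w by rewrite eq_sym.
  have vw : v != w by rewrite eq_sym.
  rewrite /edge_err; case: (plus v w); apply: one_le_slack_inv_mul.
    by have := x_triangle uw wv uv; rewrite (x_sym wv); param_lra.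
  by have := x_triangle vu uw vw; rewrite (x_sym vu); param_lra.
apply: sumr_le_subset => // w; rewrite in_setD1 => /andP[wv _].
exact: slack_inv_mul_ge0 (edge_err_ge0 wv).
Qed.

Lemma err_cluster_member (S : {set V}) u : v \in Tset x alpha S u ->
  (forall u', u' \in S -> (#|Tset x gamma S u'| <= #|Tset x gamma S u|)%N) ->
  err_on (x_block (u |: Tset x alpha S u)) S <= 2 / slack * err_on x S.
Proof.
move=> vT umax; have vS : v \in S by move: vT; rewrite in_Tset => /andP[].
rewrite {1}/err_on.
apply: le_trans (ler_sum _ (fun w => @edge_err_cluster_member S u w vT)) _.
rewrite big_split /= -!mulr_sumr.
have F0 := slack_inv_mul_ge0 (err_on_ge0 S); rewrite /err_on in F0 *.
have [bx | xb] := ltP ((alpha + gamma) / 2) (x u v); last first.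
  by rewrite [X in _ + X]big1 // addr0; lra.
have TS : Tset x gamma S v \subset S :\ v.
  by apply/subsetP => w; rewrite in_Tset !inE => /and3P[-> -> _].
rewrite /= (sum_indicator _ TS) sumr_const.
have := card_Tset_gamma_le vT bx; have := umax v vS; rewrite -(ler_nat R) /err_on.
lra.
Qed.

Lemma plus_le_outside_cluster (S : {set V}) u w : alpha < x u v -> x u v < 1 / 2 ->
  u != v -> w \in Tset x alpha S u ->
  (plus v w)%:R <= 2 * (slack^-1 * edge_err x w) + (2 / alpha * x u w - 1).
Proof.
move=> ax xh uv; rewrite in_Tset => /and3P[wS wu xuw].
have uw : u != w by rewrite eq_sym.
have vu : v != u by rewrite eq_sym.
have wv : w != v by apply: contraTneq xuw => ->; rewrite -ltNge.
have vw : v != w by rewrite eq_sym.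
have ae : alpha - x u w <= edge_err x w.
  rewrite /edge_err; case: (plus v w).
    by have := x_triangle uw wv uv; rewrite (x_sym wv); param_lra.
  by have := x_triangle vu uw vw; rewrite (x_sym vu); param_lra.
have a0 := alpha_gt0.
have h1 : alpha^-1 * (alpha - x u w) <= alpha^-1 * edge_err x w.
  by rewrite ler_wpM2l // invr_ge0 ltW.
have h2 : alpha^-1 * edge_err x w <= slack^-1 * edge_err x w.
  by rewrite ler_wpM2r ?edge_err_ge0 ?inv_alpha_le_slack_inv.
have aa : alpha^-1 * alpha = 1 by rewrite mulVf ?gt_eqF.
have : (plus v w)%:R <= 1 :> R by rewrite lern1 leq_b1.
lra.
Qed.

Lemma err_cluster_outside (S : {set V}) u : v \in S -> v \notin u |: Tset x alpha S u ->
  \sum_(w in Tset x alpha S u) x u w < alpha * #|Tset x alpha S u|%:R / 2 ->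
  \sum_(w in u |: Tset x alpha S u) (plus v w)%:R <=
  2 / slack * \sum_(w in u |: Tset x alpha S u) edge_err x w.
Proof.
move=> vS; rewrite in_setU1 negb_or => /andP[vu vT] avg.
have uv : u != v by rewrite eq_sym.
have ax : alpha < x u v by move: vT; rewrite in_Tset vS vu /= -ltNge.
set T := Tset x alpha S u.
have uT : u \notin T by rewrite in_Tset eqxx andbF.
have Tv w : w \in T -> w != v by apply: contraTneq => ->.
have Fu : (plus v u)%:R <= slack^-1 * edge_err x u.
  by apply: plus_le_slack_inv_mul => //; rewrite (x_sym vu); param_lra.
have Fu0 := slack_inv_mul_ge0 (edge_err_ge0 uv).
have FT0 : 0 <= slack^-1 * \sum_(w in T) edge_err x w.
  by apply/slack_inv_mul_ge0/sumr_ge0 => w /Tv /edge_err_ge0.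
rewrite !big_setU1 //=.
have [xh | hx] := ltP (x u v) (1 / 2).
  have : \sum_(w in T) (plus v w)%:R <=
      \sum_(w in T) (2 * (slack^-1 * edge_err x w) + (2 / alpha * x u w - 1)).
    by apply: ler_sum => w; exact: plus_le_outside_cluster.
  rewrite big_split /= sumrB sumr_const -!mulr_sumr.
  have : 2 / alpha * \sum_(w in T) x u w <= #|T|%:R.
    by rewrite mulrAC ler_pdivrMr; param_lra.
  lra.
have : \sum_(w in T) (plus v w)%:R <= slack^-1 * \sum_(w in T) edge_err x w.
  rewrite mulr_sumr; apply: ler_sum => w wT; have wv := Tv w wT.
  apply: plus_le_slack_inv_mul => //; move: wT; rewrite in_Tset => /and3P[_ wu xuw].
  have uw : u != w by rewrite eq_sym.
  by have := x_triangle uw wv uv; rewrite (x_sym wv); param_lra.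
lra.
Qed.

Definition near_set (S : {set V}) : {set V} := [set w in S :\ v | x v w <= alpha / 4].

Lemma in_near_set S w : (w \in near_set S) = [&& w != v, w \in S & x v w <= alpha / 4].
Proof. by rewrite !inE -andbA. Qed.

Lemma card_near_set_sub (S S' : {set V}) : S' \subset S ->
  (#|near_set S'| <= #|near_set S|)%N.
Proof.
move=> S'S; apply/subset_leq_card/subsetP => w.
by rewrite !in_near_set => /and3P[-> /(subsetP S'S) -> ->].
Qed.

Lemma card_near_set_D1 (S : {set V}) u : u \in near_set S ->
  #|near_set S| = #|near_set (S :\ u)|.+1.
Proof.
move=> uN; rewrite (cardsD1 u) uN add1n; congr (_.+1); apply: eq_card => w.
by rewrite !inE; case: (w == u); case: (w == v).
Qed.

Lemma card_near_set_le_Tset (S : {set V}) u : v \in S -> v != u -> x v u <= alpha / 4 ->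
  (#|near_set S| <= #|Tset x alpha S u|)%N.
Proof.
move=> vS vu xvu; have uv : u != v by rewrite eq_sym.
have vT : v \in Tset x alpha S u.
  by rewrite in_Tset vS vu (x_sym uv); param_lra.
have sub : near_set S \subset u |: (Tset x alpha S u :\ v).
  apply/subsetP => w; rewrite in_near_set in_setU1 => /and3P[wv wS xvw].
  case: (eqVneq w u) => //= wu; have vw : v != w by rewrite eq_sym.
  have uw : u != w by rewrite eq_sym.
  rewrite in_setD1 wv in_Tset wS wu /=.
  by have := x_triangle uv vw uw; rewrite (x_sym uv); param_lra.
apply: leq_trans (subset_leq_card sub) _.
by rewrite cardsU1 (cardsD1 v (Tset x alpha S u)) vT leq_add2r leq_b1.
Qed.

Lemma card_Tset_le_err (S : {set V}) u : u \in S -> v \in S -> v != u ->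
  x v u <= alpha / 4 ->
  alpha * #|Tset x alpha S u|%:R / 2 <= \sum_(w in Tset x alpha S u) x u w ->
  alpha / 4 * #|Tset x alpha S u|%:R <= err_on x S.
Proof.
move=> uS vS vu xvu avg; have uv : u != v by rewrite eq_sym.
have vT : v \in Tset x alpha S u.
  by rewrite in_Tset vS vu (x_sym uv); param_lra.
set T := Tset x alpha S u.
have TS : T :\ v \subset S :\ v.
  by apply/subsetP => w; rewrite !in_setD1 in_Tset => /andP[-> /and3P[-> _ _]].
have le_err : \sum_(w in T :\ v) (x u w - alpha / 4) <= err_on x S.
  rewrite /err_on; apply: le_trans (sumr_le_subset TS _); last first.
    by move=> w; rewrite in_setD1 => /andP[/edge_err_ge0].
  apply: ler_sum => w; rewrite in_setD1 in_Tset => /andP[wv /and3P[_ wu xuw]].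
  have vw : v != w by rewrite eq_sym.
  have uw : u != w by rewrite eq_sym.
  have := x_triangle uv vw uw; have := x_triangle vu uw vw.
  rewrite /edge_err (x_sym uv); case: (plus v w); param_lra.
have : \sum_(w in T) (x u w - alpha / 4) =
    x u v - alpha / 4 + \sum_(w in T :\ v) (x u w - alpha / 4).
  by rewrite (big_setD1 v vT).
rewrite sumrB sumr_const -(mulr_natr (alpha / 4)) (x_sym uv).
param_lra.
Qed.

(* [k] pays for the + edges from [v] to isolated pivots [u] with
   [x v u <= alpha / 4], the only errors not charged to [err_on x]; bounding it
   by [#|near_set S|] is what lets the bound [4 / alpha * err_on x S] survive
   the induction. *)
Definition run_err_bound (S : {set V}) (P : seq {set V}) : Prop :=
  exists k : R, [/\ err_on (x_of_clustering R P) S <= 2 / slack * err_on x S + k,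
    k <= #|near_set S|%:R & k <= 4 / alpha * err_on x S].

Lemma run_err_bound_in (S C : {set V}) P : alg1_run x alpha gamma (S :\: C) P ->
  v \in C -> err_on (x_block C) S <= 2 / slack * err_on x S -> run_err_bound S (C :: P).
Proof.
move=> run vC errC; exists 0; rewrite (err_on_run_in plus run vC) addr0 ler0n.
by split=> //; rewrite !mulr_ge0 ?err_on_ge0 ?invr_ge0 ?ltW ?alpha_gt0.
Qed.

Lemma run_err_bound_out (S C : {set V}) P : alg1_run x alpha gamma (S :\: C) P ->
  C \subset S -> v \notin C -> run_err_bound (S :\: C) P ->
  \sum_(w in C) (plus v w)%:R <= 2 / slack * \sum_(w in C) edge_err x w ->
  run_err_bound S (C :: P).
Proof.
move=> run CS vC [k [errP kN kF]] errC; exists k.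
rewrite (err_on_run_out plus run CS vC) (err_on_split plus x CS vC).
have := card_near_set_sub (subsetDl S C); rewrite -(ler_nat R).
have : 0 <= alpha^-1 * \sum_(w in C) edge_err x w.
  apply: mulr_ge0; first by rewrite invr_ge0 ltW ?alpha_gt0.
  apply: sumr_ge0 => w wC.
  by apply: edge_err_ge0; apply: contraNneq vC => <-.
split; lra.
Qed.

Lemma run_err_bound_near_singleton (S : {set V}) u P : alg1_run x alpha gamma (S :\ u) P ->
  u \in S -> v \in S -> v != u -> x v u <= alpha / 4 ->
  alpha * #|Tset x alpha S u|%:R / 2 <= \sum_(w in Tset x alpha S u) x u w ->
  run_err_bound (S :\ u) P -> run_err_bound S ([set u] :: P).
Proof.
move=> run uS vS vu xvu avg [k [errP kN kF]]; exists (k + 1).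
have uv : u != v by rewrite eq_sym.
have uS1 : [set u] \subset S by rewrite sub1set.
have vu1 : v \notin [set u] by rewrite inE.
have uN : u \in near_set S by rewrite in_near_set uv uS.
have := card_near_set_le_Tset vS vu xvu.
rewrite (card_near_set_D1 uN) -(ler_nat R) -addn1 natrD.
have : #|Tset x alpha S u|%:R <= 4 / alpha * err_on x S.
  by rewrite mulrAC ler_pdivlMr ?alpha_gt0 //; have := card_Tset_le_err uS vS vu xvu avg; lra.
have := slack_inv_mul_ge0 (edge_err_ge0 uv).
have : (plus v u)%:R <= 1 :> R by rewrite lern1 leq_b1.
rewrite (err_on_run_out plus run uS1 vu1) (err_on_split plus x uS1 vu1) !big_set1.
split; lra.
Qed.

Lemma alg1_run_err_bound (S : {set V}) P : alg1_run x alpha gamma S P ->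
  v \in S -> run_err_bound S P.
Proof.
elim=> {S P} [|S u P uS umax avg run IH|S u P uS umax avg run IH] vS.
- by rewrite inE in vS.
- have [vu | vu] := eqVneq v u.
    apply: (run_err_bound_in run); first by rewrite inE vu.
    by rewrite -vu in avg *; apply: err_isolated_pivot.
  have IHu : run_err_bound (S :\ u) P by apply: IH; rewrite in_setD1 vu.
  have [xvu | uxv] := leP (x v u) (alpha / 4).
    exact: run_err_bound_near_singleton.
  apply: (run_err_bound_out run); rewrite ?sub1set ?inE // !big_set1.
  have uv : u != v by rewrite eq_sym.
  have := slack_inv_mul_ge0 (edge_err_ge0 uv).
  have sx : slack <= x v u by param_lra.
  by have := plus_le_slack_inv_mul uv sx; lra.
- have [vu | vu] := eqVneq v u.
    apply: (run_err_bound_in run); first by rewrite vu setU11.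
    by rewrite -vu; apply: err_cluster_pivot.
  have [vT | vT] := boolP (v \in Tset x alpha S u).
    by apply: (run_err_bound_in run); [rewrite in_setU1 vT orbT | exact: err_cluster_member].
  have vC : v \notin u |: Tset x alpha S u by rewrite in_setU1 (negbTE vu).
  apply: (run_err_bound_out run _ vC); last exact: err_cluster_outside.
    by rewrite subUset sub1set uS; apply/subsetP => w; rewrite in_Tset => /andP[].
  by apply: IH; rewrite inE vC.
Qed.

End Charging.

Theorem theorem1 (R : realType) (alpha gamma : R) :
  0 < gamma -> gamma < alpha -> alpha < 1 / 2 ->
  exists c : R,
    forall (V : finType) (plus : rel V) (x : V -> V -> R) (P : seq {set V}),
      labeled_complete plus ->
      frac_clustering x ->
      alg1_run x alpha gamma [set: V] P ->
      forall v : V, err_clust R plus P v <= c * err_frac plus x v.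
Proof.
move=> gamma_gt0 gamma_lt_alpha alpha_lt_half.
exists (2 / slack alpha gamma + 4 / alpha) => V plus x P _ x_frac run v.
have [k [errP _ kF]] :=
  alg1_run_err_bound gamma_gt0 gamma_lt_alpha alpha_lt_half plus x_frac run (in_setT v).
rewrite /err_clust !err_frac_err_on; lra.
Qed.
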